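(* Let $V$ be a finite vocabulary, $U\in\mathbb{R}^{|V|\times d}$, $u_t=U^\top e_t$, and let $r\in\mathbb{R}^d$ be the unsteered final representation of a query $q$, with $P_\theta(t\mid q)=\mathrm{softmax}(Ur)_t$. Let $c\in V$ be the correct answer token, $P_0=P_\theta(c\mid q)<1$. Let $S\subseteq V$ with $c\in S$ and $|S|=T\ge 3$, and define $\epsilon\in[0,1)$ by $\sum_{i\in S\setminus\{c\}}P_\theta(i\mid q)=(1-\epsilon)(1-P_0)$ (assume this sum is positive). Let $r_e\neq 0$ and let the steered distribution be $P_{\theta,r_e}(t\mid q)=\mathrm{softmax}(U(r+d))_t$ where $d=\lambda|r_e|\,v$, $\lambda>0$, and $v$ is a random unit vector such that the random variables $X_i=\langle v,u_i\rangle$, $i\in S$, are i.i.d. with a continuous distribution of variance $\sigma^2>0$. Define $I_\pm=\{i\in S\setminus\{c\}:\pm(X_i-X_c)>0\}$, $P_\pm=\sum_{i\in I_\pm}P_\theta(i\mid q)$, and when $I_\pm\neq\emptyset$, $c_\pm=\frac{1}{P_\pm}\sum_{i\in I_\pm}P_\theta(i\mid q)(X_i-X_c)$; set $$\alpha=\frac{\min\{P_+,P_-\}}{(1-P_0)(1-\epsilon)},\qquad \beta=\frac{\min\{|c_-|,c_+\}}{\sigma}.$$ Then with probability at least $1-\frac{2}{T}$ (over the randomness of $v$), both $I_+$ and $I_-$ are nonempty, $\alpha>0$, $\beta>0$, and $$P_{\theta,r_e}(c\mid q)\le\frac{P_0}{P_0+(1-P_0)\,\alpha(1-\epsilon)\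big(1+\tfrac{\lambda^2\sigma^2\beta^2}{2}r_e^2\big)}.$$
   Context: Helpfulness of a model on a query $q$ with correct answer $c$ is the probability $P(c\mid q)$ the model assigns to the correct answer. Steering with coefficient $r_e$ changes the final hidden representation by $d$ with $|d|=\lambda|r_e|$; the direction of $d$ is modeled as random relative to the unembeddings of the $T$ tokens in $S$ (typically the highest-probability tokens, carrying most of the mass). *)

From HB Require Import structures.
From mathcomp Require Import all_boot all_order all_algebra.
From mathcomp Require Import all_classical all_reals all_analysis.
Set Implicit Arguments. Unset Strict Implicit. Unset Printing Implicit Defensive.
Import Order.TTheory GRing.Theory Num.Theory.
Local Open Scope ring_scope.
Local Open Scope classical_set_scope.

Definition dotv (R : realType) (d : nat) (x y : 'rV[R]_d) : R :=
  \sum_(j < d) x ord0 j * y ord0 j.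

Definition softmax (R : realType) (V : finType) (z : V -> R) (t : V) : R :=
  expR (z t) / \sum_(s : V) expR (z s).

Definition logits (R : realType) (V : finType) (d : nat)
  (u : V -> 'rV[R]_d) (x : 'rV[R]_d) : V -> R := fun t => dotv (u t) x.

Definition mutually_independent d (Omega : measurableType d) (R : realType)
  (P : probability Omega R) (V : finType) (S : {set V}) (X : V -> Omega -> R) :=
  (forall i, i \in S -> measurable_fun setT (X i)) /\
  forall (J : {set V}) (B : V -> set R), J \subset S ->
    (forall j, measurable (B j)) ->
    P (\bigcap_(j in [set j | j \in J]) (X j @^-1` B j)) =
    (\big[*%E/1%E]_(j in J) P (X j @^-1` B j))%E.

Definition identically_distributed d (Omega : measurableType d) (R : realType)
  (P : probability Omega R) (V : finType) (S : {set V}) (X : V -> Omega -> R) :=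
  forall i j, i \in S -> j \in S -> forall B : set R, measurable B ->
    P (X i @^-1` B) = P (X j @^-1` B).

Definition continuous_distribution d (Omega : measurableType d) (R : realType)
  (P : probability Omega R) (Y : Omega -> R) :=
  forall x : R, P (Y @^-1` [set x]) = 0%E.

From HB Require Import structures.
From mathcomp Require Import all_boot all_order all_algebra.
From mathcomp Require Import all_classical all_reals all_analysis.
From mathcomp Require Import ring lra.
Set Implicit Arguments. Unset Strict Implicit. Unset Printing Implicit Defensive.
Import Order.TTheory GRing.Theory Num.Theory.
Local Open Scope ring_scope.
Local Open Scope classical_set_scope.

(* Write T = #|S| and D t = <v, u_t>. Splitting the line into N cells of equal
   probability 1/N by quantiles of the atomless law of D c, independence and
   equal distribution show that D c is the largest of the (D i)_{i in S} with
   probability at most sum_(k < N) 1/N ((k+1)/N)^(T-1) <= 1/T + 1/N, hence at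
   most 1/T; the same holds for the smallest, by symmetry.  Off these two events
   some score lies above D c and some below.  Steering adds s D t to the logit of
   t, with s = lam |re|, so the steered probability of c is
   P0 / sum_t p_t exp(s (D t - D c)); keeping only c and I+ in that sum, Jensen's
   inequality and exp y >= 1 + y^2/2 (y >= 0) bound the denominator below by
   P0 + P+ (1 + (s c+)^2/2) >= P0 + min(P+, P-) (1 + (s min(|c-|, c+))^2/2). *)

Lemma expr_addr1_ge (R : realFieldType) (x : R) (m : nat) : 0 <= x ->
  x ^+ m.+1 + m.+1%:R * x ^+ m <= (x + 1) ^+ m.+1.
Proof.
move=> x_ge0; elim: m => [|m IHm]; first by rewrite !expr1 expr0 mulr1.
have xm_ge0 : 0 <= x ^+ m by rewrite exprn_ge0.
have := ler_wpM2l (addr_ge0 x_ge0 ler01) IHm.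
rewrite [(x + 1) ^+ m.+2]exprS [x ^+ m.+2]exprS [x ^+ m.+1]exprS -!natr1.
have m_ge0 : 0 <= m%:R :> R by [].
move: xm_ge0 (mulr_ge0 m_ge0 xm_ge0); set a := x ^+ m; set y := (x + 1) ^+ m.+1.
by nra.
Qed.

Lemma sum_exprn_le (R : realFieldType) (n N : nat) :
  \sum_(k < N) (k.+1%:R : R) ^+ n <= N%:R ^+ n.+1 / n.+1%:R + N%:R ^+ n.
Proof.
elim: N => [|N IHN]; first by rewrite big_ord0 expr0n mul0r add0r exprn_ge0.
rewrite big_ord_recr /= lerD2r (le_trans IHN) //.
rewrite ler_pdivlMr // mulrDl divfK // mulrC -[N.+1]addn1 natrD.
exact: expr_addr1_ge.
Qed.

Lemma riemann_sum_exprn_le (R : realFieldType) (n N : nat) : (0 < N)%N ->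
  \sum_(k < N) N%:R^-1 * (k.+1%:R / N%:R) ^+ n <= n.+1%:R^-1 + N%:R^-1 :> R.
Proof.
move=> N_gt0.
have N_neq0 : N%:R != 0 :> R by rewrite pnatr_eq0 -lt0n.
have -> : \sum_(k < N) N%:R^-1 * (k.+1%:R / N%:R) ^+ n =
    (N%:R ^+ n.+1)^-1 * \sum_(k < N) (k.+1%:R : R) ^+ n.
  rewrite mulr_sumr; apply: eq_bigr => k _.
  by rewrite expr_div_n exprS; field; rewrite expf_neq0.
rewrite -ler_pdivlMl ?invr_gt0 ?exprn_gt0 ?ltr0n // invrK.
apply: le_trans (sum_exprn_le R n N) _.
by rewrite mulrDr lerD2l exprS mulrAC divff // mul1r.
Qed.

Section continuous_cdf.
Context d (T : measurableType d) (R : realType) (P : probability T R).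
Variable Y : T -> R.
Hypothesis mY : measurable_fun setT Y.
Hypothesis atomless : continuous_distribution P Y.

HB.instance Definition _ := isMeasurableFun.Build _ _ _ _ Y mY.

Let F x := cdf (P := P) Y x.

Let cvg_cdf_left x : F (x - n.+1%:R^-1) @[n --> \oo] --> F x.
Proof.
have mYle y : measurable (Y @^-1` `]-oo, y]) by exact: measurable_funPTI.
have -> : F x = P (\bigcup_n Y @^-1` `]-oo, x - n.+1%:R^-1]).
  have Ylt : \bigcup_n Y @^-1` `]-oo, x - n.+1%:R^-1] = Y @^-1` `]-oo, x[.
    apply/seteqP; split => w /=.
      by move=> [n _]; rewrite /= !in_itv/= => /le_lt_trans; apply; rewrite ltrBlDr ltrDl.
    rewrite in_itv/= -subr_gt0 => xY.
    have [n n_lt] := filter_ex (near_infty_natSinv_lt (PosNum xY)).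
    by exists n => //=; rewrite in_itv/= lerBrDl -lerBrDr ltW.
  have Yle : Y @^-1` `]-oo, x] = Y @^-1` `]-oo, x[ `|` Y @^-1` [set x].
    apply/seteqP; split => w /=; rewrite !in_itv/=.
      by rewrite le_eqVlt => /orP[/eqP|]; [right|left].
    by case=> [/ltW|->].
  have mYlt : measurable (Y @^-1` `]-oo, x[) by exact: measurable_funPTI.
  rewrite Ylt /F /cdf /distribution /pushforward /= Yle measureU //=; last first.
    by apply/seteqP; split => // w [] /=; rewrite in_itv/= => + Yx; rewrite Yx ltxx.
  by rewrite atomless adde0.
apply: nondecreasing_cvg_mu => //; first exact: bigcupT_measurable.
move=> m n mn; apply/subsetPset => w /=; rewrite !in_itv/= => /le_trans; apply.
by rewrite lerD2l lerN2 lef_pV2 ?posrE// ler_nat.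
Qed.

(* The quantile is the supremum of [F <= t]: right continuity of the cdf rules
   out [F < t] there, and the left limit, which is [F] itself for an atomless
   law, rules out [F > t]. *)
Lemma exists_cdf_eq t : 0 < t < 1 -> exists x, P (Y @^-1` `]-oo, x]) = t%:E.
Proof.
move=> /andP[t_gt0 t_lt1].
have [a Fa] : exists a, (F a < t%:E)%E.
  have tnbhs : nbhs (0 : \bar R) [set y | (y < t%:E)%E] := nbhs_open_ereal_lt (f := fun=> t) t_gt0.
  have [M [_ M_below]] := cvg_cdfNy0 (P := P) Y tnbhs.
  by exists (M - 1); apply: M_below; rewrite gtrDl ltrN10.
have [b Fb] : exists b, (t%:E < F b)%E.
  have tnbhs : nbhs (1%E : \bar R) [set y | (t%:E < y)%E] := nbhs_open_ereal_gt (f := fun=> t) t_lt1.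
  have [M [_ M_above]] := cvg_cdfy1 (P := P) Y tnbhs.
  by exists (M + 1); apply: M_above; rewrite ltrDl.
pose A := [set y | (F y <= t%:E)%E].
have ubA : ubound A b.
  move=> y Fy; rewrite leNgt; apply/negP => /ltW/(cdf_nondecreasing (P := P) Y) Fby.
  by have := lt_le_trans Fb (le_trans Fby Fy); rewrite ltxx.
have supA : has_sup A by split; [exists a; exact: ltW | exists b].
exists (sup A); apply/le_anti/andP; split.
  apply: (cvge_to_le (@cvg_cdf_left (sup A))); apply: nearW => n.
  have n1 : 0 < n.+1%:R^-1 :> R by rewrite invr_gt0.
  have [y Ay lty] := sup_adherent n1 supA.
  exact: le_trans (cdf_nondecreasing (P := P) Y (ltW lty)) Ay.
rewrite leNgt; apply/negP => F_lt.
have nbhsF : nbhs (F (sup A)) [set y | (y < t%:E)%E].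
  have Ffin : F (sup A) \is a fin_num.
    by rewrite /F /cdf fin_num_measure.
  rewrite -(fineK Ffin); apply: (nbhs_open_ereal_lt (f := fun=> t)).
  by rewrite -lte_fin fineK.
have [e e_gt0 near_F] := cdf_right_continuous (P := P) (X := Y) nbhsF.
have Ase : A (sup A + e / 2).
  apply/ltW/near_F; last by rewrite ltrDl divr_gt0.
  by rewrite /ball_ /= opprD addNKr normrN gtr0_norm ?divr_gt0 // ltr_pdivrMr // ltr_pMr // ltr1n.
by have := sup_upper_bound supA Ase; rewrite gerDl leNgt divr_gt0.
Qed.
End continuous_cdf.

Definition max_event (Om : Type) (R : realType) (V : finType) (S : {set V})
    (Y : V -> Om -> R) (c : V) : set Om :=
  [set w | forall i, i \in S -> Y i w <= Y c w].

Section max_of_iid.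
Context d (Om : measurableType d) (R : realType) (P : probability Om R).
Context (V : finType) (S : {set V}) (Y : V -> Om -> R) (c : V).
Hypotheses (cS : c \in S) (indep : mutually_independent P S Y).
Hypotheses (iid : identically_distributed P S Y).
Hypothesis atomless : continuous_distribution P (Y c).

Let mY : forall i, i \in S -> measurable_fun setT (Y i) := indep.1.

Let measurable_preimage i B : i \in S -> measurable B -> measurable (Y i @^-1` B).
Proof. by move=> iS mB; rewrite -[X in measurable X]setTI; exact: mY. Qed.

Lemma measurable_max_event : measurable (max_event S Y c).
Proof.
have -> : max_event S Y c = \bigcap_(i in [set i | i \in S]) [set w | Y i w <= Y c w].
  by apply/seteqP; split => w /= H i; apply: H.
apply: fin_bigcap_measurable => [|i /= iS]; first exact: finite_finset.
by rewrite -[X in measurable X]setTI; apply: measurable_fun_le => //; apply: mY.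
Qed.

Section quantile_grid.
Variable N : nat.
Hypothesis N_gt0 : (0 < N)%N.

Let F x := P (Y c @^-1` `]-oo, x]).

Let quantile k : R := xget 0 [set x | F x = (k%:R / N%:R)%:E].

Let F_quantile k : (0 < k < N)%N -> F (quantile k) = (k%:R / N%:R)%:E.
Proof.
move=> /andP[k_gt0 kN]; apply: (xgetPex 0 (exists_cdf_eq (mY cS) atomless _)).
by rewrite divr_gt0 ?ltr0n //= ltr_pdivrMr ?ltr0n // mul1r ltr_nat.
Qed.

(* [L k] is the down-set of reals below the (k/N)-quantile of [Y c]; [L 0] and
   [L N] are set by hand since the 0- and 1-quantiles need not exist. *)
Let L k : set R :=
  if k == 0%N then set0 else if (N <= k)%N then setT else `]-oo, quantile k].

Let measurable_L k : measurable (L k).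
Proof. by rewrite /L; case: ifP => _ //; case: ifP => _ //; exact: measurable_itv. Qed.

Let prob_L k : (k <= N)%N -> P (Y c @^-1` L k) = (k%:R / N%:R)%:E.
Proof.
move=> kN; rewrite /L; case: ifP => [/eqP ->|k_neq0].
  by rewrite preimage_set0 measure0 mul0r.
case: ifP => [Nk|Nk].
  have -> : k = N by apply/eqP; rewrite eqn_leq kN Nk.
  by rewrite preimage_setT probability_setT divff // pnatr_eq0 -lt0n.
by apply: F_quantile; rewrite lt0n k_neq0 ltnNge Nk.
Qed.

Let L_downward k y z : y <= z -> L k z -> L k y.
Proof.
by rewrite /L => yz; case: ifP => // _; case: ifP => // _; rewrite /= !in_itv /= => /(le_trans yz).
Qed.

Let L_nondecreasing k : (k < N)%N -> L k `<=` L k.+1.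
Proof.
move=> kN y; rewrite /L; case: ifP => [//|k_neq0].
rewrite leqNgt kN /=; case: ifP => // Nk1; rewrite /= !in_itv/= => /le_trans; apply.
rewrite leNgt; apply/negP => /ltW lt_q.
have : (F (quantile k.+1) <= F (quantile k))%E.
  apply: le_measure; rewrite ?inE; try exact: measurable_preimage.
  by move=> w /=; rewrite !in_itv/= => /le_trans; apply.
rewrite !F_quantile ?lt0n ?k_neq0 ?kN ?ltnNge ?Nk1 // lee_fin.
by rewrite ler_pM2r ?invr_gt0 ?ltr0n // ler_nat ltnn.
Qed.

Let cell_bound k (j : V) : set R := if j == c then L k.+1 `\` L k else L k.+1.

Let cell_event k := \bigcap_(j in [set j | j \in S]) (Y j @^-1` cell_bound k j).

Let measurable_cell_bound k j : measurable (cell_bound k j).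
Proof. by rewrite /cell_bound; case: ifP => _; [apply: measurableD|]. Qed.

Let prob_cell_event k : (k < N)%N ->
  P (cell_event k) = (N%:R^-1 * (k.+1%:R / N%:R) ^+ #|S :\ c|)%:E.
Proof.
move=> kN; rewrite /cell_event indep.2 // (big_setD1 c cS) /=.
rewrite (eq_bigr (fun=> (k.+1%:R / N%:R)%:E)); last first.
  move=> i; rewrite in_setD1 => /andP[ic iS].
  by rewrite /cell_bound (negbTE ic) (iid iS cS) ?prob_L.
rewrite prodEFin prodr_const /cell_bound eqxx.
rewrite (_ : _ @^-1` (_ `\` _) = Y c @^-1` L k.+1 `\` Y c @^-1` L k) //.
rewrite measureD //; first last.
- by rewrite (le_lt_trans (probability_le1 _ _)) ?ltry //; exact: measurable_preimage.
- exact: measurable_preimage.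
- exact: measurable_preimage.
rewrite setIidr; last by move=> w /= /L_nondecreasing; apply.
rewrite [X in ((X - _) * _)%E](prob_L kN) [X in ((_ - X) * _)%E](prob_L (ltnW kN)).
by rewrite -EFinB -EFinM -mulrBl -natrB // subSnn mul1r mulrC.
Qed.

Let max_event_sub_cells : max_event S Y c `<=` \big[setU/set0]_(k < N) cell_event k.
Proof.
move=> w max_w; rewrite -bigcup_mkord.
have LN : L N (Y c w) by rewrite /L leqnn gtn_eqF.
have [m Lm m_min] := ex_minnP (ex_intro (fun k => `[< L k (Y c w) >]) N (asboolT LN)).
move/asboolP: Lm => Lm.
have m_gt0 : (0 < m)%N by rewrite lt0n; apply/negP => /eqP m0; rewrite m0 in Lm.
have m_leN : (m <= N)%N by apply: m_min; exact/asboolP.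
exists m.-1; first by rewrite /= -ltnS prednK.
move=> j /= jS; rewrite /cell_bound prednK //; case: ifP => [/eqP -> | _].
  split => // Lm1; have := m_min _ (asboolT Lm1).
  by rewrite -ltnS prednK // ltnn.
exact: L_downward (max_w j jS) Lm.
Qed.

Lemma prob_max_event_le_grid : (P (max_event S Y c) <= (#|S|%:R^-1 + N%:R^-1)%:E)%E.
Proof.
have measurable_cell k : measurable (cell_event k).
  apply: fin_bigcap_measurable => [|j /= jS]; first exact: finite_finset.
  exact: measurable_preimage.
apply: le_trans (content_subadditive P (fun k _ => measurable_cell k)
  measurable_max_event max_event_sub_cells) _.
rewrite (eq_bigr _ (fun k _ => prob_cell_event (ltn_ord k))) sumEFin lee_fin.
have -> : #|S| = #|S :\ c|.+1 by rewrite (cardsD1 c S) cS.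
exact: riemann_sum_exprn_le.
Qed.
End quantile_grid.

Lemma prob_max_event_le : (P (max_event S Y c) <= (#|S|%:R^-1)%:E)%E.
Proof.
have Mfin : P (max_event S Y c) \is a fin_num.
  by rewrite fin_num_measure //; exact: measurable_max_event.
rewrite -(fineK Mfin) lee_fin; apply/ler_addgt0Pr => e e_gt0.
have [n n_lt] := filter_ex (near_infty_natSinv_lt (PosNum e_gt0)).
have := prob_max_event_le_grid (ltn0Sn n); rewrite -(fineK Mfin) lee_fin => /le_trans; apply.
by rewrite lerD2l ltW.
Qed.
End max_of_iid.

Section composition.
Context d (Om : measurableType d) (R : realType) (P : probability Om R).
Context (V : finType) (S : {set V}) (X : V -> Om -> R) (g : R -> R).
Hypothesis mg : measurable_fun setT g.

Let measurable_preimage_g B : measurable B -> measurable (g @^-1` B).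
Proof. by move=> mB; rewrite -[X in measurable X]setTI; exact: mg. Qed.

Lemma mutually_independent_comp :
  mutually_independent P S X -> mutually_independent P S (fun i => g \o X i).
Proof.
case=> mX indep; split => [i iS|J B JS mB]; first exact: measurableT_comp (mX i iS).
exact: indep J (fun j => g @^-1` B j) JS (fun j => measurable_preimage_g (mB j)).
Qed.

Lemma identically_distributed_comp :
  identically_distributed P S X -> identically_distributed P S (fun i => g \o X i).
Proof. by move=> iid i j iS jS B mB; exact: iid i j iS jS _ (measurable_preimage_g mB). Qed.
End composition.

Lemma continuous_distribution_opp d (Om : measurableType d) (R : realType)
    (P : probability Om R) (Y : Om -> R) :
  continuous_distribution P Y -> continuous_distribution P (fun w => - Y w).
Proof.
move=> atomless x; rewrite -(atomless (- x)); congr (P _).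
by apply/seteqP; split => w /=; [move=> <- | move=> ->]; rewrite opprK.
Qed.

Lemma expR_ge1Dsqr_half (R : realType) (x : R) : 0 <= x -> 1 + x ^+ 2 / 2 <= expR x.
Proof.
move=> x_ge0; have y_ge0 : 0 <= x / 3 by rewrite divr_ge0.
have -> : x = 3%:R * (x / 3) by rewrite mulrC divfK.
rewrite expRM_natl; move: y_ge0; set y := x / 3 => y_ge0.
have cube_le : (1 + y) ^+ 3 <= expR y ^+ 3.
  by rewrite lerXn2r ?nnegrE ?expR_ge0 ?expR_ge1Dx ?addr_ge0.
by apply: le_trans cube_le; nra.
Qed.

Lemma logits_translate (R : realType) (V : finType) (n : nat) (u : V -> 'rV[R]_n)
    (r x : 'rV[R]_n) (a : R) :
  logits u (r + a *: x) = (fun t => logits u r t + a * dotv x (u t)).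
Proof.
apply: funext => t; rewrite /logits /dotv mulr_sumr -big_split /=.
by apply: eq_bigr => j _; rewrite !mxE; ring.
Qed.

Section softmax_translation.
Context (R : realType) (V : finType).
Implicit Types (z D p f : V -> R).

Lemma softmax_gt0 z t : 0 < softmax z t.
Proof.
rewrite /softmax divr_gt0 ?expR_gt0 // (bigD1 t) //= ltr_pwDl ?expR_gt0 //.
by rewrite sumr_ge0 // => s _; rewrite expR_ge0.
Qed.

Lemma softmax_translate z D s c :
  softmax (fun t => z t + s * D t) c =
  softmax z c / \sum_t softmax z t * expR (s * (D t - D c)).
Proof.
have sum_gt0 f : 0 < \sum_t expR (f t).
  by rewrite (bigD1 c) //= ltr_pwDl ?expR_gt0 // sumr_ge0 // => t _; rewrite expR_ge0.
have -> : \sum_t softmax z t * expR (s * (D t - D c)) =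
    (\sum_t expR (z t + s * D t)) / ((\sum_t expR (z t)) * expR (s * D c)).
  rewrite mulr_suml; apply: eq_bigr => t _; rewrite /softmax mulrBr expRB expRD.
  by field; rewrite !gt_eqF ?expR_gt0 ?sum_gt0.
rewrite /softmax expRD; field.
by rewrite !gt_eqF ?expR_gt0 ?sum_gt0.
Qed.

Lemma expR_wmean_le (I : {set V}) p f :
  (forall i, i \in I -> 0 <= p i) -> 0 < \sum_(i in I) p i ->
  (\sum_(i in I) p i) * expR ((\sum_(i in I) p i)^-1 * \sum_(i in I) p i * f i)
    <= \sum_(i in I) p i * expR (f i).
Proof.
move=> p_ge0 PI_gt0; set PI := \sum_(i in I) p i; set m := PI^-1 * _.
have tangent i : i \in I -> p i * expR m * (1 + (f i - m)) <= p i * expR (f i).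
  move=> iI; rewrite -mulrA ler_wpM2l ?p_ge0 // -[f i](subrK m) addrK expRD mulrC.
  by rewrite ler_wpM2r ?expR_ge0 ?expR_ge1Dx.
have mean_mul : \sum_(i in I) p i * f i = PI * m.
  by rewrite /m mulrA divff ?mul1r ?gt_eqF.
have tangent_sum : \sum_(i in I) p i * expR m * (1 + (f i - m)) = PI * expR m.
  rewrite (eq_bigr (fun i => expR m * (p i + p i * f i - m * p i))); last by move=> i _; ring.
  rewrite -mulr_sumr !big_split /= sumrN -!mulr_sumr -/PI mean_mul; ring.
by rewrite -tangent_sum; exact: ler_sum.
Qed.
End softmax_translation.

Lemma softmax_translate_le (R : realType) (V : finType) (z D : V -> R) (c : V)
    (I : {set V}) (s a b : R) :
  c \notin I -> 0 <= s ->
  0 < a <= \sum_(i in I) softmax z i ->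
  0 <= b <= (\sum_(i in I) softmax z i)^-1 * \sum_(i in I) softmax z i * (D i - D c) ->
  softmax (fun t => z t + s * D t) c <=
    softmax z c / (softmax z c + a * (1 + (s * b) ^+ 2 / 2)).
Proof.
move=> cI s_ge0 /andP[a_gt0 a_le] /andP[b_ge0 b_le].
set p := softmax z; set PI := \sum_(i in I) p i; set m := PI^-1 * _ in b_le.
have p_gt0 t : 0 < p t := softmax_gt0 z t.
have PI_gt0 : 0 < PI := lt_le_trans a_gt0 a_le.
have gain_ge0 : 0 <= a * (1 + (s * b) ^+ 2 / 2).
  by rewrite mulr_ge0 ?addr_ge0 ?divr_ge0 ?sqr_ge0 // ltW.
have drop_terms : p c + \sum_(i in I) p i * expR (s * (D i - D c)) <=
    \sum_t p t * expR (s * (D t - D c)).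
  rewrite [X in _ <= X](bigID (mem I)) /= addrC lerD2r.
  rewrite (bigD1 c) //= subrr mulr0 expR0 mulr1 lerDl.
  by rewrite sumr_ge0 // => t _; rewrite mulr_ge0 ?expR_ge0 ?ltW.
have jensen : PI * expR (s * m) <= \sum_(i in I) p i * expR (s * (D i - D c)).
  have mean_scale : PI^-1 * \sum_(i in I) p i * (s * (D i - D c)) = s * m.
    rewrite [RHS]mulrCA; congr (_ * _); rewrite mulr_sumr.
    by apply: eq_bigr => i _; rewrite mulrCA.
  rewrite -mean_scale.
  exact: expR_wmean_le (fun i => s * (D i - D c)) (fun i _ => ltW (p_gt0 i)) PI_gt0.
have gain_le : a * (1 + (s * b) ^+ 2 / 2) <= PI * expR (s * m).
  have sm_ge0 : 0 <= s * m := mulr_ge0 s_ge0 (le_trans b_ge0 b_le).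
  have sqr_le : (s * b) ^+ 2 <= (s * m) ^+ 2.
    by apply: lerXn2r; rewrite ?nnegrE ?sm_ge0 ?mulr_ge0 //; apply: ler_wpM2l.
  apply: ler_pM => //; first exact: ltW.
    by rewrite addr_ge0 ?divr_ge0 ?sqr_ge0.
  by apply: le_trans (expR_ge1Dsqr_half sm_ge0); rewrite lerD2l ler_pM2r.
have lower : p c + a * (1 + (s * b) ^+ 2 / 2) <= \sum_t p t * expR (s * (D t - D c)).
  by apply: le_trans drop_terms; rewrite lerD2l (le_trans gain_le jensen).
have denom_gt0 : 0 < p c + a * (1 + (s * b) ^+ 2 / 2).
  by apply: lt_le_trans (p_gt0 c) _; rewrite lerDl.
rewrite softmax_translate -/p ler_pM2l // lef_pV2 ?posrE //.
exact: lt_le_trans denom_gt0 lower.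
Qed.

Definition extreme_event (Om : Type) (R : realType) (V : finType) (S : {set V})
    (X : V -> Om -> R) (c : V) : set Om :=
  max_event S X c `|` max_event S (fun i => -%R \o X i) c.

Section extreme_of_iid.
Context d (Om : measurableType d) (R : realType) (P : probability Om R).
Context (V : finType) (S : {set V}) (X : V -> Om -> R) (c : V).
Hypotheses (cS : c \in S) (indep : mutually_independent P S X).
Hypotheses (iid : identically_distributed P S X).
Hypothesis atomless : continuous_distribution P (X c).

Let indepN := mutually_independent_comp (@measurable_realfun.oppr_measurable R setT) indep.
Let iidN := identically_distributed_comp (@measurable_realfun.oppr_measurable R setT) iid.

Lemma measurable_extreme_event : measurable (extreme_event S X c).
Proof. exact: measurableU (measurable_max_event cS indep) (measurable_max_event cS indepN). Qed.

Lemma prob_extreme_event_le : (P (extreme_event S X c) <= (2 / #|S|%:R)%:E)%E.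
Proof.
apply: le_trans (measureU2 _ (measurable_max_event cS indep) (measurable_max_event cS indepN)) _.
rewrite -[2]/(1 + 1) mulrDl mul1r EFinD leeD //; first exact: prob_max_event_le.
exact: (prob_max_event_le cS indepN iidN (continuous_distribution_opp atomless)).
Qed.
End extreme_of_iid.

Lemma not_max_event (Om : Type) (R : realType) (V : finType) (S : {set V})
    (Y : V -> Om -> R) (c : V) (w : Om) :
  ~ max_event S Y c w -> exists2 i, i \in S & Y c w < Y i w.
Proof.
move=> not_max; apply: contrapT => no_i; apply: not_max => i iS.
by rewrite leNgt; apply/negP => lt_ci; apply: no_i; exists i.
Qed.

Lemma not_extreme_event (Om : Type) (R : realType) (V : finType) (S : {set V})
    (Y : V -> Om -> R) (c : V) (w : Om) :
  ~ extreme_event S Y c w ->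
  (exists2 i, i \in S & Y c w < Y i w) /\ (exists2 j, j \in S & Y j w < Y c w).
Proof.
move=> not_extreme; split.
  by apply: not_max_event => max_w; apply: not_extreme; left.
have [j jS] : exists2 j, j \in S & - Y c w < - Y j w.
  by apply: (not_max_event (Y := fun i => -%R \o Y i)) => min_w; apply: not_extreme; right.
by rewrite ltrN2; exists j.
Qed.

Lemma wmean_gt0 (R : realFieldType) (V : finType) (I : {set V}) (p f : V -> R) (i0 : V) :
  i0 \in I -> (forall i, 0 < p i) -> (forall i, i \in I -> 0 < f i) ->
  0 < \sum_(i in I) p i /\ 0 < (\sum_(i in I) p i)^-1 * \sum_(i in I) p i * f i.
Proof.
move=> i0I p_gt0 f_gt0.
have sum_gt0 (g : V -> R) : (forall i, i \in I -> 0 < g i) -> 0 < \sum_(i in I) g i.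
  move=> g_gt0; apply: lt_le_trans (g_gt0 i0 i0I) _.
  by rewrite (bigD1 i0) //= lerDl sumr_ge0 // => i /andP[iI _]; exact: ltW (g_gt0 i iI).
have PI_gt0 : 0 < \sum_(i in I) p i by apply: sum_gt0.
by split => //; rewrite mulr_gt0 ?invr_gt0 // sum_gt0 // => i iI; rewrite mulr_gt0 ?f_gt0.
Qed.

Lemma steered_softmax_le (R : realType) (V : finType) (dim : nat)
    (u : V -> 'rV[R]_dim) (r x : 'rV[R]_dim) (c : V) (S : {set V})
    (eps re lam sigma : R) :
  let p := softmax (logits u r) in
  let P0 := p c in
  let D i := dotv x (u i) in
  P0 < 1 -> eps < 1 -> 0 <= lam -> 0 < sigma ->
  (exists2 i, i \in S & D c < D i) -> (exists2 j, j \in S & D j < D c) ->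
  let Ip := [set i in S :\ c | 0 < D i - D c] in
  let Im := [set i in S :\ c | 0 < - (D i - D c)] in
  let Pp := \sum_(i in Ip) p i in
  let Pm := \sum_(i in Im) p i in
  let cp := Pp^-1 * \sum_(i in Ip) p i * (D i - D c) in
  let cm := Pm^-1 * \sum_(i in Im) p i * (D i - D c) in
  let alpha := Num.min Pp Pm / ((1 - P0) * (1 - eps)) in
  let beta := Num.min `|cm| cp / sigma in
  [/\ Ip != finset.set0, Im != finset.set0, 0 < alpha, 0 < beta &
    softmax (logits u (r + (lam * `|re|) *: x)) c <=
      P0 / (P0 + (1 - P0) * alpha * (1 - eps) *
        (1 + lam ^+ 2 * sigma ^+ 2 * beta ^+ 2 / 2 * re ^+ 2))].
Proof.
move=> p P0 D P0_lt1 eps_lt1 lam_ge0 sigma_gt0 [i iS ci] [j jS cj].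
move=> Ip Im Pp Pm cp cm alpha beta.
have iIp : i \in Ip.
  by rewrite !inE iS subr_gt0 ci !andbT; apply: contraTneq ci => ->; rewrite ltxx.
have jIm : j \in Im.
  by rewrite !inE jS oppr_gt0 subr_lt0 cj !andbT; apply: contraTneq cj => ->; rewrite ltxx.
have [Pp_gt0 cp_gt0] : 0 < Pp /\ 0 < cp.
  by apply: wmean_gt0 iIp (softmax_gt0 _) _ => t; rewrite inE => /andP[].
have [Pm_gt0 cm_lt0] : 0 < Pm /\ cm < 0.
  have [] := wmean_gt0 jIm (softmax_gt0 (logits u r)) (f := fun t => - (D t - D c)) _.
    by move=> t; rewrite inE => /andP[].
  by rewrite (eq_bigr _ (fun t _ => mulrN _ _)) sumrN mulrN oppr_gt0.
have P0_gt0 : 0 < P0 := softmax_gt0 _ _.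
have min_mass_gt0 : 0 < Num.min Pp Pm by rewrite lt_min Pp_gt0.
have min_mean_gt0 : 0 < Num.min `|cm| cp by rewrite lt_min normr_gt0 lt_eqF.
split; first by apply/set0Pn; exists i.
- by apply/set0Pn; exists j.
- by rewrite divr_gt0 // mulr_gt0 // subr_gt0.
- exact: divr_gt0.
have -> : (1 - P0) * alpha * (1 - eps) *
    (1 + lam ^+ 2 * sigma ^+ 2 * beta ^+ 2 / 2 * re ^+ 2) =
    Num.min Pp Pm * (1 + (lam * `|re| * Num.min `|cm| cp) ^+ 2 / 2).
  rewrite /alpha /beta -(real_normK (num_real re)).
  by field; rewrite !gt_eqF ?subr_gt0.
rewrite logits_translate; apply: (softmax_translate_le (I := Ip)).
- by rewrite !inE eqxx.
- exact: mulr_ge0.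
- by rewrite min_mass_gt0 ge_min lexx.
- by rewrite ltW //= ge_min lexx orbT.
Qed.

Theorem theorem2 (R : realType) (V : finType) (dim : nat)
  (u : V -> 'rV[R]_dim) (r : 'rV[R]_dim) (c : V) (S : {set V})
  (eps : R) (re lam sigma : R)
  (dO : measure_display) (Omega : measurableType dO) (P : probability Omega R)
  (v : Omega -> 'rV[R]_dim) :
  let p := softmax (logits u r) in
  let P0 := p c in
  let X : V -> Omega -> R := fun i w => dotv (v w) (u i) in
  P0 < 1 ->
  c \in S -> (3 <= #|S|)%N ->
  0 < \sum_(i in S :\ c) p i ->
  0 <= eps < 1 ->
  \sum_(i in S :\ c) p i = (1 - eps) * (1 - P0) ->
  re != 0 -> 0 < lam ->
  (forall w, dotv (v w) (v w) = 1) ->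
  mutually_independent P S X ->
  identically_distributed P S X ->
  (forall i, i \in S -> continuous_distribution P (X i)) ->
  0 < sigma ->
  (forall i, i \in S -> X i \in Lfun P 2%:E /\ 'V_P[X i] = (sigma ^+ 2)%:E) ->
  exists E : set Omega, measurable E /\
    ((1 - 2 / #|S|%:R)%:E <= P E)%E /\
    forall w, E w ->
      let Ip := [set i in S :\ c | 0 < X i w - X c w] in
      let Im := [set i in S :\ c | 0 < - (X i w - X c w)] in
      let Pp := \sum_(i in Ip) p i in
      let Pm := \sum_(i in Im) p i in
      let cp := Pp^-1 * \sum_(i in Ip) p i * (X i w - X c w) in
      let cm := Pm^-1 * \sum_(i in Im) p i * (X i w - X c w) in
      let alpha := Num.min Pp Pm / ((1 - P0) * (1 - eps)) in
      let beta := Num.min `|cm| cp / sigma in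
      let psteer := softmax (logits u (r + (lam * `|re|) *: v w)) in
      [/\ Ip != finset.set0, Im != finset.set0, 0 < alpha, 0 < beta &
        psteer c <= P0 / (P0 + (1 - P0) * alpha * (1 - eps) *
                     (1 + lam ^+ 2 * sigma ^+ 2 * beta ^+ 2 / 2 * re ^+ 2))].
Proof.
move=> p P0 X P0_lt1 cS _ _ /andP[_ eps_lt1] _ _ lam_gt0 _ indep iid atomless sigma_gt0 _.
have mE := measurable_extreme_event cS indep.
exists (~` extreme_event S X c); split; first exact: measurableC.
split.
  rewrite probability_setC // EFinB leeB //.
  exact: prob_extreme_event_le cS indep iid (atomless c cS).
move=> w not_extreme; have [above below] := not_extreme_event not_extreme.
exact: (steered_softmax_le (x := v w)) P0_lt1 eps_lt1 (ltW lam_gt0) sigma_gt0 above below.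
Qed.
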